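(* Let $X$ be a rearrangement invariant space on $[0,1]$ which is an interpolation space between $L^1([0,1])$ and $L^\infty([0,1])$, and let $(w_{n_k})$ be a $q$-lacunary sequence of Walsh functions with $q>1$. Then $(w_{n_k})$ is a basic sequence in $X$, i.e. there is a constant $K>0$ such that $\|\sum_{k=1}^Ma_kw_{n_k}\|_X\le K\|\sum_{k=1}^Na_kw_{n_k}\|_X$ for all $M<N$ and all real $a_1,\dots,a_N$.
   Context: $m$ is Lebesgue measure. A Banach function space $X$ over $[0,1]$ is a linear space of measurable functions with a complete norm such that $g\in X$, $|f|\le|g|$ a.e. imply $f\in X$, $\|f\|_X\le\|g\|_X$; it is rearrangement invariant (r.i.) if equimeasurable functions have equal norms (and membership). $X$ is an interpolation space between $L^1$ and $L^\infty$ if $L^\infty\subset X\subset L^1$ continuously and every linear operator bounded on $L^1$ and on $L^\infty$ is bounded on $X$. Rademacher functions $r_k(t)=\mathrm{sign}\sin(2^k\pi t)$; Walsh functions (Paley numbering) $w_0=1$, $w_k=r_1^{a_1}\cdots r_n^{a_n}$ for $k=\sum_{i=1}^na_i2^{i-1}$, $a_i\in\{0,1\}$. $(w_{n_k})$ is $q$-lacunary if $n_{k+1}/n_k\ge q$ for all $k$. *)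

From mathcomp Require Import all_boot all_order all_algebra.
From mathcomp Require Import all_classical all_reals all_analysis.
Set Implicit Arguments. Unset Strict Implicit. Unset Printing Implicit Defensive.
Import Order.TTheory GRing.Theory Num.Theory.
Import numFieldNormedType.Exports.
Local Open Scope classical_set_scope.
Local Open Scope ring_scope.

Section Defs.
Variable R : realType.
Notation mu := (@lebesgue_measure R).
Notation I01 := (`[0%R, 1%R]%classic : set R).

Definition ae_eq01 (f g : R -> R) : Prop :=
  {ae mu, forall x, I01 x -> f x = g x}.

Definition ae_bdd01 (f : R -> R) (M : R) : Prop :=
  {ae mu, forall x, I01 x -> `|f x| <= M}.

Definition L1norm (f : R -> R) : \bar R :=
  (\int[mu]_(x in I01) (`|f x|)%:E)%E.

(* A Banach function (lattice) norm on measurable functions on [0,1];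
   the space X is {f measurable on [0,1] | rho f < +oo}. *)
Definition inX (rho : (R -> R) -> \bar R) (f : R -> R) : Prop :=
  measurable_fun I01 f /\ (rho f < +oo)%E.

Definition banach_function_norm (rho : (R -> R) -> \bar R) : Prop :=
  [/\ (forall f : R -> R, measurable_fun I01 f -> (0 <= rho f)%E),
      (forall f : R -> R, measurable_fun I01 f -> (rho f = 0%E <-> ae_eq01 f (fun=> 0))),
      (forall (a : R) f, measurable_fun I01 f ->
          rho (fun x => a * f x) = (`|a|%:E * rho f)%E),
      (forall f g : R -> R, measurable_fun I01 f -> measurable_fun I01 g ->
          (rho (fun x => (f x + g x)%R) <= rho f + rho g)%E) &
      (forall f g : R -> R, measurable_fun I01 f -> measurable_fun I01 g ->
          {ae mu, forall x, I01 x -> (`|f x| <= `|g x|)%R} -> (rho f <= rho g)%E)] /\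
      (forall u : nat -> R -> R, (forall n, inX rho (u n)) ->
         (forall e : R, 0 < e -> exists N, forall m n, (N <= m)%N -> (N <= n)%N ->
              (rho (fun x => (u n x - u m x)%R) <= e%:E)%E) ->
         exists f, inX rho f /\
           (forall e : R, 0 < e -> exists N, forall n, (N <= n)%N ->
              (rho (fun x => (u n x - f x)%R) <= e%:E)%E)).

Definition rearrangement_invariant (rho : (R -> R) -> \bar R) : Prop :=
  forall f g : R -> R, measurable_fun I01 f -> measurable_fun I01 g ->
    (forall t : R, mu (I01 `&` [set x | t < `|f x|]) =
                   mu (I01 `&` [set x | t < `|g x|])) ->
    rho f = rho g.

(* T (defined on L^1[0,1] = L^1 + L^oo) is linear (modulo a.e. equality) *)
Definition ae_linear (T : (R -> R) -> (R -> R)) : Prop :=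
  forall (f g : R -> R) (a b : R), mu.-integrable I01 (EFin \o f) ->
    mu.-integrable I01 (EFin \o g) ->
    ae_eq01 (T (fun x => a * f x + b * g x)) (fun x => a * T f x + b * T g x).

Definition bounded_L1 (T : (R -> R) -> (R -> R)) : Prop :=
  exists C : R, forall f, mu.-integrable I01 (EFin \o f) ->
    mu.-integrable I01 (EFin \o T f) /\ (L1norm (T f) <= C%:E * L1norm f)%E.

Definition bounded_Linf (T : (R -> R) -> (R -> R)) : Prop :=
  exists C : R, forall f (M : R), mu.-integrable I01 (EFin \o f) ->
    ae_bdd01 f M -> ae_bdd01 (T f) (C * M).

Definition bounded_on_X (rho : (R -> R) -> \bar R) (T : (R -> R) -> (R -> R)) :
  Prop := exists C : R, forall f, inX rho f -> inX rho (T f) /\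
    (rho (T f) <= C%:E * rho f)%E.

Definition interpolation_L1_Linf (rho : (R -> R) -> \bar R) : Prop :=
  [/\
      (exists C : R, forall f (M : R), measurable_fun I01 f ->
          ae_bdd01 f M -> (rho f <= (C * M)%:E)%E),
      (exists C : R, forall f, inX rho f ->
          mu.-integrable I01 (EFin \o f) /\ (L1norm f <= C%:E * rho f)%E) &
      (forall T, ae_linear T -> bounded_L1 T -> bounded_Linf T ->
          bounded_on_X rho T)].

Definition rademacher (k : nat) (t : R) : R :=
  Num.sg (sin (2 ^+ k * pi * t)).

(* Walsh functions, Paley numbering: w_n = prod_i r_{i+1}^{a_i},
   n = sum_i a_i 2^i (bits a_i of n) *)
Definition walsh (n : nat) (t : R) : R :=
  \prod_(i < n) (if odd (n %/ 2 ^ i) then rademacher i.+1 t else 1).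

Definition lacunary (q : R) (n : nat -> nat) : Prop :=
  forall k, (0 < n k)%N /\ q * (n k)%:R <= (n k.+1)%:R.

End Defs.

From mathcomp Require Import all_boot all_order all_algebra.
From mathcomp Require Import all_classical all_reals all_analysis.
From mathcomp Require Import measurable_realfun.
From mathcomp Require Import ring lra zify.
Import Order.TTheory GRing.Theory Num.Theory.
Import numFieldNormedType.Exports.

(* A Walsh function w_n with n < 2^J is constant on each dyadic interval of
   length 2^-J, so a Walsh polynomial is a step function indexed by m < 2^J.
   Flipping one binary digit of m permutes these intervals, which preserves
   the norm of a rearrangement invariant space.  Averaging a Walsh polynomial
   with its flipped copy, up to a sign, keeps exactly the terms whose index
   has a prescribed binary digit, and by the triangle inequality it does not
   increase the norm; iterating, the projection onto the indices with finitely
   many prescribed digits is a contraction.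
   For M < N let 2^j <= n_M < 2^(j+1).  The partial sum S_M is the projection
   of S_N onto the indices below 2^j plus the terms k < M with n_k >= 2^j;
   each of these is itself a projection of S_N, and by lacunarity there are at
   most L of them, L depending only on q.  Hence ||S_M|| <= (1 + L) ||S_N||. *)

Set Implicit Arguments.
Unset Strict Implicit.
Unset Printing Implicit Defensive.

Definition bitn (i n : nat) : bool := odd (n %/ 2 ^ i).

Definition flipbit (i n : nat) : nat :=
  if bitn i n then n - 2 ^ i else n + 2 ^ i.

Lemma bitn0 n : bitn 0 n = odd n.
Proof. by rewrite /bitn expn0 divn1. Qed.

Lemma bitnS i n : bitn i.+1 n = bitn i n./2.
Proof. by rewrite /bitn -divn2 -divnMA -expnS. Qed.

Lemma bitn_small i n : n < 2 ^ i -> bitn i n = false.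
Proof. by move=> h; rewrite /bitn divn_small. Qed.

Lemma bitn_index_lt J i n : n < 2 ^ J -> bitn i n -> i < J.
Proof.
move=> hn; apply: contraTT; rewrite -leqNgt => hJ.
by rewrite bitn_small // (leq_trans hn) // leq_exp2l.
Qed.

Lemma flipbit0 m : (flipbit 0 m)./2 = m./2 /\ odd (flipbit 0 m) = ~~ odd m.
Proof. by rewrite /flipbit bitn0 expn0; case: ifP; lia. Qed.

Lemma flipbitS i m :
  (flipbit i.+1 m)./2 = flipbit i m./2 /\ odd (flipbit i.+1 m) = odd m.
Proof.
rewrite /flipbit bitnS expnS mul2n; have := expn_gt0 2 i.
case: ifP => //; [move=> hi|lia].
have : (2 ^ i <= m./2) by rewrite leqNgt; apply: contraTN hi => /bitn_small ->.
lia.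
Qed.

Lemma bitn_flipbit i j m : bitn j (flipbit i m) = bitn j m (+) (j == i).
Proof.
elim: j i m => [|j IH] [|i] m.
- by rewrite !bitn0 (flipbit0 m).2; case: (odd m).
- by rewrite !bitn0 (flipbitS i m).2 addbF.
- by rewrite !bitnS (flipbit0 m).1 addbF.
- by rewrite !bitnS (flipbitS i m).1 IH eqSS.
Qed.

Lemma flipbitK i : involutive (flipbit i).
Proof.
move=> m; have := bitn_flipbit i i m; rewrite eqxx addbT {2}/flipbit.
case hm: (bitn i m) => /= hf; rewrite {1}/flipbit hf /flipbit hm ?addnK //.
by rewrite subnK // leqNgt; apply: contraTN hm => /bitn_small ->.
Qed.

Lemma flipbit_lt J i m : i < J -> m < 2 ^ J -> flipbit i m < 2 ^ J.
Proof.
elim: J i m => [//|J IH] [|i] m hi; rewrite expnS; have := expn_gt0 2 J.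
- by rewrite /flipbit bitn0 expn0; case: ifP; lia.
- have [h1 h2] := flipbitS i m; have := IH i m./2 hi; lia.
Qed.

Lemma eq_bitn J n n' : n < 2 ^ J -> n' < 2 ^ J ->
  (forall i, i < J -> bitn i n = bitn i n') -> n = n'.
Proof.
elim: J n n' => [|J IH] n n'; first by rewrite expn0; lia.
rewrite expnS => hn hn' hb; have := hb 0 isT; rewrite !bitn0.
have : n./2 = n'./2.
  by apply: IH => [||i hi]; [lia|lia|rewrite -!bitnS hb].
lia.
Qed.

Lemma ltn_exp_bitn J j n : n < 2 ^ J -> j <= J ->
  n < 2 ^ j <-> (forall i, j <= i < J -> bitn i n = false).
Proof.
move=> hn hj; split=> [h i /andP[hi _]|h].
  by rewrite bitn_small // (leq_trans h) // leq_exp2l.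
rewrite ltnNge; apply/negP => hjn.
have n0 : (0 < n) by rewrite (leq_trans _ hjn) ?expn_gt0.
have /andP[hi1 hi2] := trunc_log_bounds (isT : 1 < 2) n0.
set i := trunc_log 2 n in hi1 hi2.
have hji : (j <= i) by rewrite -ltnS -(@ltn_exp2l 2) // (leq_ltn_trans hjn).
have hiJ : (i < J) by rewrite -(@ltn_exp2l 2) // (leq_ltn_trans hi1).
suff e : n %/ 2 ^ i = 1 by move: (h i); rewrite hji hiJ /bitn e => /(_ isT).
apply/eqP; rewrite eqn_leq divn_gt0 ?expn_gt0 // hi1 andbT.
by rewrite -ltnS ltn_divLR ?expn_gt0 // -expnS.
Qed.

Lemma ltn_exp_sum j N (nn : nat -> nat) k :
  k < N -> nn k < 2 ^ (j + \sum_(l < N) nn l).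
Proof.
move=> hk; apply: leq_trans (ltn_expl _ (isT : 1 < 2)) _.
by rewrite leq_exp2l // (bigD1 (Ordinal hk)) //= addnCA leq_addr.
Qed.

Local Open Scope classical_set_scope.
Local Open Scope ring_scope.

Lemma measurable_sum_cond (d : measure_display) (T : measurableType d) (R : realType)
    (D : set T) (I : Type) (r : seq I) (P : pred I) (f : I -> T -> R) :
  (forall i, measurable_fun D (f i)) ->
  measurable_fun D (fun x => \sum_(i <- r | P i) f i x).
Proof.
move=> mf; under eq_fun do rewrite big_mkcond; apply: measurable_sum => i.
by case: (P i); [exact: mf | exact: measurable_cst].
Qed.

Section dyadic_intervals.
Variable R : realType.

Lemma sgr_sin_pi (p : nat) (x : R) :
  p%:R < x < p.+1%:R -> Num.sg (sin (pi * x)) = (-1) ^+ p.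
Proof.
elim: p x => [|p IH] x /andP[h1 h2].
  rewrite expr0; apply: gtr0_sg; apply: sin_gt0_pi.
  by rewrite mulr_gt0 ?pi_gt0 //= -[ltRHS]mulr1 ltr_pM2l ?pi_gt0.
have -> : pi * x = pi * (x - 1) + pi by ring.
rewrite sinDpi sgrN IH ?exprS ?mulN1r //.
by rewrite ltrBrDr ltrBlDr -!natr1 in h1 h2 *; rewrite h1 h2.
Qed.

Definition dyadic_itv (J m : nat) : set R :=
  `](m%:R / 2 ^+ J), (m.+1%:R / 2 ^+ J)[%classic.

Lemma dyadic_itvP J m t :
  dyadic_itv J m t <-> m%:R < t * 2 ^+ J < m.+1%:R.
Proof.
have p : (0 : R) < 2 ^+ J by apply: exprn_gt0.
by rewrite /dyadic_itv /= in_itv /= ltr_pdivrMr // ltr_pdivlMr.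
Qed.

(* The k-th Rademacher function reads the binary digit of weight 2^-k. *)
Lemma rademacher_dyadic J m k t : (0 < k <= J)%N -> dyadic_itv J m t ->
  rademacher k t = (-1) ^+ bitn (J - k) m.
Proof.
move=> /andP[k0 kJ] /dyadic_itvP /andP[h1 h2].
rewrite /rademacher -mulrA [_ * (pi * _)]mulrCA (@sgr_sin_pi (m %/ 2 ^ (J - k))).
  by rewrite -signr_odd.
have hd : (0 : R) < (2 ^ (J - k))%:R by rewrite ltr0n expn_gt0.
have e : t * 2 ^+ J = 2 ^+ k * t * (2 ^ (J - k))%:R.
  by rewrite [2 ^+ k * t]mulrC -mulrA natrX -exprD subnKC.
rewrite e in h1 h2; rewrite -(ltr_pM2r hd) -(ltr_pM2r hd (2 ^+ k * t)) -!natrM.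
apply/andP; split; [apply: le_lt_trans _ h1 | apply: lt_le_trans h2 _]; rewrite ler_nat.
  exact: leq_trunc_div.
by rewrite ltn_ceil ?expn_gt0.
Qed.

Lemma measurable_rademacher k : measurable_fun setT (@rademacher R k).
Proof.
have sgr_nd : {homo (@Num.sg R) : x y / x <= y}.
  by move=> x y hxy; case: (sgrP x) => hx; case: (sgrP y) => hy //; lra.
apply: measurableT_comp; first exact: nondecreasing_measurable sgr_nd.
apply: continuous_measurable_fun => x; apply: continuous_comp; last exact: continuous_sin.
by apply: continuousM; [exact: cst_continuous | exact: cvg_id].
Qed.

Lemma measurable_walsh n : measurable_fun setT (@walsh R n).
Proof.
apply: (measurable_prod (s := index_enum 'I_n)) => i _.
by case: (odd _); [exact: measurable_rademacher | exact: measurable_cst].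
Qed.

Lemma measurable_walshZ (c : R) n : measurable_fun setT (fun t => c * walsh n t).
Proof. by apply: measurable_funM; [exact: measurable_cst | exact: measurable_walsh]. Qed.

Lemma measurable_walsh_sum (I : Type) (r : seq I) (P : pred I) (c : I -> R)
    (nn : I -> nat) :
  measurable_fun setT (fun t => \sum_(i <- r | P i) c i * walsh (nn i) t).
Proof. by apply: measurable_sum_cond => i; exact: measurable_walshZ. Qed.

Definition walsh_dyadic (J n m : nat) : R :=
  \prod_(i < n) (if bitn i n then (-1) ^+ bitn (J - i.+1) m else 1).

Lemma walsh_on_dyadic J n m t : (n < 2 ^ J)%N -> dyadic_itv J m t ->
  walsh n t = walsh_dyadic J n m.
Proof.
move=> hn hD; apply: eq_bigr => i _; rewrite -/(bitn i n).
case hb: (bitn i n) => //; apply: rademacher_dyadic hD.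
by rewrite ltn0Sn; exact: bitn_index_lt hb.
Qed.

Lemma walsh_dyadic_flipbit J n i m : (n < 2 ^ J)%N -> (i < J)%N ->
  walsh_dyadic J n (flipbit (J - i.+1) m) = (-1) ^+ bitn i n * walsh_dyadic J n m.
Proof.
move=> hn hi.
have digit l : (if bitn l n then (-1) ^+ bitn (J - l.+1) (flipbit (J - i.+1) m) else 1)
    = (if l == i then (-1) ^+ bitn i n else 1) *
      (if bitn l n then (-1) ^+ bitn (J - l.+1) m else 1) :> R.
  rewrite bitn_flipbit signr_addb.
  case: (eqVneq l i) => [->|nli]; case hb: (bitn _ n); rewrite ?mul1r ?mulr1 //.
    by rewrite eqxx mulrC.
  have lJ := bitn_index_lt hn hb.
  by rewrite (_ : (J - l.+1 == J - i.+1)%N = false) ?mulr1 //; apply/eqP; lia.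
rewrite /walsh_dyadic (eq_bigr _ (fun (l : 'I_n) _ => digit l)) big_split /=; congr (_ * _).
case: (ltnP i n) => hin.
  rewrite (bigD1 (Ordinal hin)) //= eqxx big1 ?mulr1 // => l.
  by rewrite -val_eqE => /negbTE ->.
have nsmall : (n < 2 ^ i)%N.
  by rewrite (leq_trans (ltn_expl n (isT : (1 < 2)%N))) // leq_exp2l.
by rewrite bitn_small // big1 // => l _; case: eqP.
Qed.

Lemma dyadic_itv_inj J m m' t : dyadic_itv J m t -> dyadic_itv J m' t -> m = m'.
Proof.
move=> /dyadic_itvP/andP[a1 a2] /dyadic_itvP/andP[b1 b2].
have := lt_trans a1 b2; have := lt_trans b1 a2; rewrite !ltr_nat; lia.
Qed.

Lemma dyadic_itv_sub01 J m : (m < 2 ^ J)%N -> dyadic_itv J m `<=` `[0%R, 1%R].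
Proof.
move=> hm t /dyadic_itvP/andP[a1 a2].
have p : (0 : R) < 2 ^+ J by apply: exprn_gt0.
rewrite /= in_itv /=; apply/andP; split.
  by rewrite -(pmulr_lge0 _ p) (le_trans _ (ltW a1)).
by rewrite -(ler_pM2r p) mul1r (le_trans (ltW a2)) // -natrX ler_nat.
Qed.

Lemma dyadic_itv_cover J (x : R) : x \in `[0, 1] ->
  ~ range (fun m : nat => m%:R / 2 ^+ J) x ->
  exists2 m, (m < 2 ^ J)%N & dyadic_itv J m x.
Proof.
rewrite in_itv /= => /andP[x0 x1] offgrid.
have p : (0 : R) < 2 ^+ J by apply: exprn_gt0.
have /andP[t1 t2] := truncn_itv (mulr_ge0 x0 (ltW p)).
set m := Num.truncn (x * 2 ^+ J) in t1 t2.
have t1' : m%:R < x * 2 ^+ J.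
  rewrite lt_neqAle t1 andbT; apply/eqP => e; apply: offgrid.
  by exists m => //; rewrite e mulrK // unitfE gt_eqF.
exists m; last by apply/dyadic_itvP; rewrite t1' t2.
rewrite -(ltr_nat R) natrX (lt_le_trans t1') //.
by rewrite -[leRHS]mul1r ler_pM2r.
Qed.

Definition dyadic_step (J : nat) (F : nat -> R) (t : R) : R :=
  \sum_(m < 2 ^ J) F m * \1_(dyadic_itv J m) t.

Lemma dyadic_step_on J F m t : (m < 2 ^ J)%N -> dyadic_itv J m t ->
  dyadic_step J F t = F m.
Proof.
move=> hm hD; rewrite /dyadic_step (bigD1 (Ordinal hm)) //= indicE mem_set // mulr1.
rewrite big1 ?addr0 // => l hl; rewrite indicE memNset ?mulr0 // => hl'.
by move: hl; rewrite -val_eqE /= (dyadic_itv_inj hl' hD) eqxx.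
Qed.

Lemma dyadic_step_off J F t : (forall m, (m < 2 ^ J)%N -> ~ dyadic_itv J m t) ->
  dyadic_step J F t = 0.
Proof.
by move=> h; rewrite /dyadic_step big1 // => l _; rewrite indicE memNset ?mulr0 //; apply: h.
Qed.

Lemma measurable_dyadic_step J F : measurable_fun setT (dyadic_step J F).
Proof.
apply: measurable_sum => m; apply: measurable_funM; first exact: measurable_cst.
by apply: measurable_indic; exact: measurable_itv.
Qed.

Local Notation mu := (@lebesgue_measure R).

Lemma mu_dyadic_itv J m : mu (dyadic_itv J m) = (2 ^+ J)^-1%:E.
Proof.
have p : (0 : R) < 2 ^+ J by apply: exprn_gt0.
rewrite lebesgue_measure_itv /= lte_fin ltr_pM2r ?invr_gt0 // ltr_nat ltnSn.
by rewrite -EFinD -mulrBl -natrB // subSnn mul1r.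
Qed.

Lemma dyadic_step_distr J F (s : R) : 0 <= s ->
  mu (`[0, 1] `&` [set x | s < `|dyadic_step J F x|]) =
  (\sum_(m < 2 ^ J | (s < `|F m|)%R) (2 ^+ J)^-1%:E)%E.
Proof.
move=> s0.
have -> : `[0, 1] `&` [set x | s < `|dyadic_step J F x|] =
    \big[setU/set0]_(m < 2 ^ J | s < `|F m|) dyadic_itv J m.
  rewrite -bigcup_seq_cond; apply/seteqP; split => x /=.
    move=> [x01 hs].
    have [[m hm hD]|off] := pselect (exists2 m, (m < 2 ^ J)%N & dyadic_itv J m x).
      by exists (Ordinal hm); rewrite /= ?mem_index_enum -?(dyadic_step_on F hm hD).
    move: hs; rewrite dyadic_step_off ?normr0 ?ltNge ?s0 // => l hl hD.
    by apply: off; exists l.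
  move=> [m /andP[_ hs] hD]; split; first exact: dyadic_itv_sub01 (ltn_ord m) _ hD.
  by rewrite (dyadic_step_on F (ltn_ord m) hD).
rewrite measure_bigsetU_ord_cond => [|m _|m m' _ _ [x [h1 h2]]].
- by apply: eq_bigr => m _; exact: mu_dyadic_itv.
- exact: measurable_itv.
- exact/val_inj/(dyadic_itv_inj h1 h2).
Qed.

Lemma dyadic_step_perm_distr J F (p : nat -> nat) (s : R) :
  (forall m, (m < 2 ^ J)%N -> (p m < 2 ^ J)%N) -> involutive p ->
  mu (`[0, 1] `&` [set x | s < `|dyadic_step J (F \o p) x|]) =
  mu (`[0, 1] `&` [set x | s < `|dyadic_step J F x|]).
Proof.
move=> hp ip; have [s0|s0] := leP 0 s.
  rewrite !dyadic_step_distr //.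
  pose po (m : 'I_(2 ^ J)) : 'I_(2 ^ J) := Ordinal (hp m (ltn_ord m)).
  have ipo : injective po by move=> a b /(congr1 val) /(congr1 p); rewrite /= !ip => /val_inj.
  by rewrite [RHS](reindex_inj ipo).
have all01 (G : R -> R) : `[0, 1] `&` [set x | s < `|G x|] = `[0, 1]%classic.
  by apply/seteqP; split => [x []//|x hx]; split => //=; apply: lt_le_trans s0 _.
by rewrite !all01.
Qed.

Lemma dyadic_step_avg J F G (s : R) : dyadic_step J (fun m => 2^-1 * (F m + s * G m)) =
  (fun t => 2^-1 * (dyadic_step J F t + s * dyadic_step J G t)).
Proof.
apply/funext => t; rewrite /dyadic_step mulr_sumr -big_split mulr_sumr.
by apply: eq_bigr => m _ /=; ring.
Qed.

End dyadic_intervals.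

Arguments dyadic_itv {R}.
Arguments walsh_dyadic {R}.
Arguments dyadic_step {R}.

Section lattice_norm.
Variables (R : realType) (rho : (R -> R) -> \bar R).
Hypothesis hrho : banach_function_norm rho.

Let measurable01 (f : R -> R) : measurable_fun setT f -> measurable_fun (`[0, 1] : set R) f.
Proof. by move=> mf; apply: measurable_funS mf. Qed.

Lemma rho_ge0 (f : R -> R) : measurable_fun setT f -> (0 <= rho f)%E.
Proof. by case: hrho => -[h _ _ _ _] _ /measurable01; apply: h. Qed.

Lemma rho0 : rho (fun=> 0) = 0%E.
Proof. by case: hrho => -[_ h _ _ _] _; apply/(h _ (measurable_cst _)); apply: aeW. Qed.

Lemma rhoZ (c : R) (f : R -> R) : measurable_fun setT f ->
  rho (fun x => c * f x) = (`|c|%:E * rho f)%E.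
Proof. by case: hrho => -[_ _ h _ _] _ /measurable01; apply: h. Qed.

Lemma rhoD (f g : R -> R) : measurable_fun setT f -> measurable_fun setT g ->
  (rho (fun x => (f x + g x)%R) <= rho f + rho g)%E.
Proof. by case: hrho => -[_ _ _ h _] _ /measurable01 mf /measurable01; apply: h. Qed.

Lemma rho_sum (I : Type) (r : seq I) (P : pred I) (f : I -> R -> R) :
  (forall i, measurable_fun setT (f i)) ->
  (rho (fun t => (\sum_(i <- r | P i) f i t)%R) <= \sum_(i <- r | P i) rho (f i))%E.
Proof.
move=> mf; elim: r => [|i r IH].
  by under eq_fun do rewrite big_nil; rewrite big_nil rho0.
rewrite big_cons; under eq_fun do rewrite big_cons.
case: (P i) => //; apply: le_trans (rhoD (mf i) _) (leeD (lexx _) IH).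
exact: measurable_sum_cond.
Qed.

Lemma rho_avg_le (f g : R -> R) (s : R) :
  measurable_fun setT f -> measurable_fun setT g -> rho g = rho f -> `|s| <= 1 ->
  (rho (fun t => 2^-1 * (f t + s * g t))%R <= rho f)%E.
Proof.
move=> mf mg hgf s1; have msg := measurable_funM (measurable_cst s) mg.
rewrite rhoZ ?ger0_norm ?invr_ge0 //; last exact: measurable_funD.
have := rhoD mf msg; rewrite rhoZ // hgf.
case: (rho f) (rho_ge0 mf) => [r| |] //= r0 hle; last by rewrite leey.
apply: le_trans (lee_wpmul2l _ hle) _; first by rewrite lee_fin.
rewrite lee_fin in r0; rewrite -EFinM lee_fin.
have : `|s| * r <= r by rewrite ler_piMl.
lra.
Qed.

(* Two functions agreeing on all dyadic intervals of level J agree off the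
   countable grid of their endpoints, hence almost everywhere. *)
Lemma rho_eq_dyadic J (f g : R -> R) :
  measurable_fun setT f -> measurable_fun setT g ->
  (forall m t, (m < 2 ^ J)%N -> dyadic_itv J m t -> f t = g t) -> rho f = rho g.
Proof.
pose grid := range (fun m : nat => m%:R / 2 ^+ J : R).
have cgrid : countable grid by exact: sub_countable (card_image_le _ _) (countableP _).
suff le_rho (f' g' : R -> R) : measurable_fun setT f' -> measurable_fun setT g' ->
    (forall m t, (m < 2 ^ J)%N -> dyadic_itv J m t -> f' t = g' t) ->
    (rho f' <= rho g')%E.
  move=> mf mg h; apply/le_anti/andP.
  by split; apply: le_rho => // m t hm hD; rewrite (h m t hm hD).
move=> mf mg h; case: hrho => -[_ _ _ _ hle] _.
apply: hle; [exact: measurable01 | exact: measurable01 |].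
exists grid; split.
- by apply: countable_measurable cgrid => t; exact: measurable_set1.
- exact: countable_lebesgue_measure0 cgrid.
move=> x /= hx; apply: contrapT => offgrid; apply: hx => x01.
have [m hm hD] := dyadic_itv_cover x01 offgrid.
by rewrite (h m x hm hD).
Qed.

End lattice_norm.

Definition bits_match (ops : seq (nat * bool)) (n : nat) : bool :=
  all (fun o => bitn o.1 n == o.2) ops.

Section walsh_projection.
Variables (R : realType) (rho : (R -> R) -> \bar R).
Hypotheses (hrho : banach_function_norm rho) (hri : rearrangement_invariant rho).

Lemma rho_dyadic_step_perm J F (p : nat -> nat) :
  (forall m, (m < 2 ^ J)%N -> (p m < 2 ^ J)%N) -> involutive p ->
  rho (dyadic_step J (F \o p)) = rho (dyadic_step J F).
Proof.
move=> hp ip; apply: hri => [||t]; last exact: dyadic_step_perm_distr.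
all: exact: measurable_funS (measurable_dyadic_step _ _).
Qed.

Lemma rho_dyadic_step_avg J i (F : nat -> R) (s : bool) : (i < J)%N ->
  (rho (dyadic_step J (fun m => 2^-1 * (F m + (-1) ^+ s * F (flipbit i m)))%R)
   <= rho (dyadic_step J F))%E.
Proof.
move=> hi; rewrite dyadic_step_avg.
apply: rho_avg_le; rewrite ?normr_sign //; try exact: measurable_dyadic_step.
by apply: (rho_dyadic_step_perm F); [move=> m; exact: flipbit_lt | exact: flipbitK].
Qed.

Lemma walsh_dyadic_avg J N (c : nat -> R) (nn : nat -> nat) i (s : bool) m :
  (forall k, (k < N)%N -> (nn k < 2 ^ J)%N) -> (i < J)%N ->
  2^-1 * (\sum_(k < N) c k * walsh_dyadic J (nn k) m +
    (-1) ^+ s * \sum_(k < N) c k * walsh_dyadic J (nn k) (flipbit (J - i.+1) m)) =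
  \sum_(k < N) (c k * (bitn i (nn k) == s)%:R) * walsh_dyadic J (nn k) m.
Proof.
move=> hn hi; rewrite mulr_sumr -big_split mulr_sumr; apply: eq_bigr => k _.
rewrite walsh_dyadic_flipbit ?hn //.
by case: s; case: (bitn i (nn k)); rewrite /= ?expr0 ?expr1; field.
Qed.

Lemma rho_walsh_dyadic_select J N (c : nat -> R) (nn : nat -> nat) ops :
  (forall k, (k < N)%N -> (nn k < 2 ^ J)%N) -> all (fun o => o.1 < J)%N ops ->
  (rho (dyadic_step J (fun m =>
       \sum_(k < N) (c k * (bits_match ops (nn k))%:R) * walsh_dyadic J (nn k) m)%R)
   <= rho (dyadic_step J (fun m => \sum_(k < N) c k * walsh_dyadic J (nn k) m)%R))%E.
Proof.
move=> hn; elim: ops c => [|[i s] ops IH] c.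
  by move=> _; under [X in dyadic_step _ X]eq_fun do under eq_bigr do rewrite mulr1.
move=> /= /andP[hi hops].
under [X in dyadic_step _ X]eq_fun do under eq_bigr do rewrite -mulnb natrM mulrA.
apply: le_trans (IH (fun k => c k * (bitn i (nn k) == s)%:R) hops) _.
under [X in dyadic_step _ X]eq_fun => m do rewrite -(walsh_dyadic_avg c s m hn hi).
by apply: rho_dyadic_step_avg; rewrite ltn_subrL (leq_ltn_trans _ hi).
Qed.

Lemma rho_walsh_select J N (c : nat -> R) (nn : nat -> nat) ops :
  (forall k, (k < N)%N -> (nn k < 2 ^ J)%N) -> all (fun o => o.1 < J)%N ops ->
  (rho (fun t => \sum_(k < N) (c k * (bits_match ops (nn k))%:R) * walsh (nn k) t)%R
   <= rho (fun t => \sum_(k < N) c k * walsh (nn k) t)%R)%E.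
Proof.
move=> hn hops.
have to_step (c' : nat -> R) : rho (fun t => \sum_(k < N) c' k * walsh (nn k) t) =
    rho (dyadic_step J (fun m => \sum_(k < N) c' k * walsh_dyadic J (nn k) m)).
  apply: (rho_eq_dyadic hrho (J := J)) => [||m t hm hD].
  - exact: measurable_walsh_sum.
  - exact: measurable_dyadic_step.
  rewrite (dyadic_step_on _ hm hD); apply: eq_bigr => k _.
  by rewrite (walsh_on_dyadic (hn k (ltn_ord k)) hD).
rewrite (to_step c) (to_step (fun k => c k * (bits_match ops (nn k))%:R)).
exact: rho_walsh_dyadic_select.
Qed.

Lemma rho_walsh_low j N (c : nat -> R) (nn : nat -> nat) :
  (rho (fun t => \sum_(k < N) (c k * (nn k < 2 ^ j)%N%:R) * walsh (nn k) t)%R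
   <= rho (fun t => \sum_(k < N) c k * walsh (nn k) t)%R)%E.
Proof.
pose J := (j + \sum_(l < N) nn l)%N.
have hn k : (k < N)%N -> (nn k < 2 ^ J)%N by exact: ltn_exp_sum.
pose ops := [seq (i, false) | i <- iota j (J - j)].
have hops : all (fun o => o.1 < J)%N ops.
  by rewrite all_map; apply/allP => i; rewrite mem_iota subnKC ?leq_addr // => /andP[].
have low (k : 'I_N) : bits_match ops (nn k) = (nn k < 2 ^ j)%N.
  have lowP := ltn_exp_bitn (hn k (ltn_ord k)) (leq_addr _ j).
  apply/allP/idP => [h|/lowP h o].
    apply/lowP => i hi; apply/eqP/(h (i, false)).
    by apply/mapP; exists i; rewrite ?mem_iota ?subnKC ?leq_addr.
  by case/mapP => i; rewrite mem_iota subnKC ?leq_addr // => hi ->; apply/eqP/h.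
by under eq_fun do under eq_bigr => k _ do rewrite -low; exact: rho_walsh_select hops.
Qed.

Lemma rho_walsh_coef N (c : nat -> R) (nn : nat -> nat) k :
  {in gtn N &, injective nn} -> (k < N)%N ->
  (rho (fun t => c k * walsh (nn k) t)%R
   <= rho (fun t => \sum_(l < N) c l * walsh (nn l) t)%R)%E.
Proof.
move=> inj hk.
pose J := (0 + \sum_(l < N) nn l)%N.
have hn l : (l < N)%N -> (nn l < 2 ^ J)%N by exact: ltn_exp_sum.
pose ops := [seq (i, bitn i (nn k)) | i <- iota 0 J].
have hops : all (fun o => o.1 < J)%N ops.
  by rewrite all_map; apply/allP => i; rewrite mem_iota.
have only_k (l : 'I_N) : bits_match ops (nn l) = (l == k :> nat).
  apply/idP/eqP => [/allP h|->]; last by apply/allP => o /mapP[i _ ->].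
  apply: inj; rewrite ?inE //; apply: (eq_bitn (hn l (ltn_ord l)) (hn k hk)) => i hi.
  by apply/eqP; apply: (h (i, bitn i (nn k))); apply/mapP; exists i; rewrite ?mem_iota.
suff -> : (fun t => c k * walsh (nn k) t) =
    (fun t => \sum_(l < N) (c l * (bits_match ops (nn l))%:R) * walsh (nn l) t).
  exact (rho_walsh_select c hn hops).
apply/funext => t; rewrite (bigD1 (Ordinal hk)) //= (only_k (Ordinal hk)) eqxx mulr1.
rewrite big1 ?addr0 // => l.
by rewrite only_k -val_eqE => /negbTE ->; rewrite mulr0 mul0r.
Qed.

End walsh_projection.

Lemma bernoulli_ineq (R : realDomainType) (h : R) n :
  -1 <= h -> 1 + n%:R * h <= (1 + h) ^+ n.
Proof.
move=> h1; elim: n => [|n IH]; first by rewrite mul0r addr0 expr0.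
rewrite exprSr; apply: le_trans (ler_wpM2r _ IH); last lra.
by rewrite -natr1 mulrDl mul1r; have := sqr_ge0 h; have := ler0n R n; nra.
Qed.

Lemma exists_expr_ge (R : archiFieldType) (q c : R) : 1 < q ->
  exists n, c <= q ^+ n.
Proof.
move=> q1; set h := q - 1; have h0 : 0 < h by rewrite subr_gt0.
have -> : q = 1 + h by rewrite /h addrC subrK.
have h1 : -1 <= h by rewrite (le_trans _ (ltW h0)) // lerN10.
exists (Num.truncn ((c - 1) / h)).+1; apply: le_trans (bernoulli_ineq _ h1).
by rewrite -lerBlDl -ler_pdivrMr // ltW // truncnS_gt.
Qed.

Section lacunary.
Variables (R : realType) (q : R) (n : nat -> nat).
Hypotheses (q1 : 1 < q) (hlac : lacunary q n).

Lemma lacunary_incr : {homo n : k l / (k < l)%N}.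
Proof.
apply: homo_ltn => [y x z|k]; first exact: ltn_trans.
rewrite -(ltr_nat R); have [n0 hnext] := hlac k; apply: lt_le_trans hnext.
by rewrite ltr_pMl // ltr0n.
Qed.

Lemma lacunary_mono : {homo n : k l / (k <= l)%N}.
Proof.
by apply: homo_leq => [x|y x z|k]; [exact: leqnn | exact: leq_trans | exact/ltnW/lacunary_incr].
Qed.

Lemma lacunary_inj : injective n.
Proof. by move=> k l; apply: contra_eq; rewrite neq_ltn => /orP[] /lacunary_incr; lia. Qed.

Lemma lacunary_expr k d : q ^+ d * (n k)%:R <= (n (k + d))%:R.
Proof.
elim: d => [|d IH]; first by rewrite expr0 mul1r addn0.
rewrite addnS exprS -mulrA; apply: le_trans (hlac _).2.
by rewrite ler_wpM2l // ltW // (lt_trans ltr01).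
Qed.

(* L is any exponent with 2 <= q ^+ L: a counted k has
   q ^+ (M - k) * n k <= n M < 2 * n k, so M - k < L. *)
Lemma lacunary_count : exists L, forall M j,
  (n M < 2 ^ j.+1)%N -> (#|[pred k : 'I_M | 2 ^ j <= n k]| <= L)%N.
Proof.
have [L qL] := exists_expr_ge 2 q1; exists L => M j hM.
apply: (@leq_trans #|[pred k : 'I_M | (M - L <= k)%N]|).
  apply: subset_leq_card; apply/fintype.subsetP => k; rewrite !inE => hk.
  have : ((n M)%:R < 2 * (n k)%:R :> R).
    by rewrite -natrM ltr_nat mul2n -addnn; move: hM; rewrite expnS; lia.
  apply: contraTT; rewrite -ltnNge -leNgt => small.
  have hL : (L <= M - k)%N by lia.
  have := lacunary_expr k (M - k); rewrite subnKC ?(ltnW (ltn_ord k)) // => grow.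
  apply: le_trans grow; apply: ler_wpM2r => //; apply: le_trans qL _.
  by rewrite ler_eXn2l.
rewrite -sum1_card (_ : \sum_(_ in _) 1 = \sum_(M - L <= i < M) 1)%N.
  by rewrite sum_nat_const_nat; lia.
by rewrite big_geq_mkord; apply: eq_bigl.
Qed.

End lacunary.

Lemma sum_split_low (R : pzRingType) (n : nat -> nat) (c w : nat -> R) M N j :
  {homo n : k l / (k <= l)%N} -> (M <= N)%N -> (2 ^ j <= n M)%N ->
  \sum_(k < M) c k * w k =
  \sum_(k < N) (c k * (n k < 2 ^ j)%N%:R) * w k +
  \sum_(k < M | (2 ^ j <= n k)%N) c k * w k.
Proof.
move=> n_mono hMN hj.
rewrite (bigID (fun k : 'I_N => (k < M)%N)) /= [X in _ + X + _]big1 => [|k]; last first.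
  rewrite -leqNgt => /n_mono/(leq_trans hj).
  by rewrite leqNgt => /negbTE ->; rewrite mulr0 mul0r.
rewrite addr0 -(big_ord_widen _ (fun k => c k * (n k < 2 ^ j)%N%:R * w k) hMN).
rewrite [X in _ + X]big_mkcond -big_split; apply: eq_bigr => k _ /=.
by case: leqP; rewrite /= ?mulr1 ?mulr0 ?mul0r ?add0r ?addr0.
Qed.

Theorem proposition4p2 (R : realType) (rho : (R -> R) -> \bar R)
  (q : R) (n : nat -> nat) :
  banach_function_norm rho -> rearrangement_invariant rho ->
  interpolation_L1_Linf rho ->
  1 < q -> lacunary q n ->
  exists K : R, 0 < K /\
    forall (M N : nat) (a : nat -> R), (M < N)%N ->
      (rho (fun t => (\sum_(k < M) a k * walsh (n k) t)%R)
        <= K%:E * rho (fun t => (\sum_(k < N) a k * walsh (n k) t)%R))%E.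
Proof.
move=> hrho hri _ q1 hlac.
have [L hL] := lacunary_count q1 hlac.
exists L.+1%:R; split => // M N a hMN.
have /andP[jlo jhi] := trunc_log_bounds (isT : (1 < 2)%N) (hlac M).1.
set j := trunc_log 2 (n M) in jlo jhi.
have split_at := sum_split_low a _ (lacunary_mono q1 hlac) (ltnW hMN) jlo.
under eq_fun => t do rewrite (split_at (fun k => walsh (n k) t)).
apply: le_trans (rhoD hrho (measurable_walsh_sum _ _ _ _) (measurable_walsh_sum _ _ _ _)) _.
have low := rho_walsh_low hrho hri j N a n.
have high := rho_sum hrho (index_enum 'I_M) (fun k : 'I_M => (2 ^ j <= n k)%N)
  (fun k => measurable_walshZ (a k) (n k)).
have coef := lee_sum (index_enum 'I_M) (fun (k : 'I_M) (_ : (2 ^ j <= n k)%N) =>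
  rho_walsh_coef hrho hri a (in2W (lacunary_inj q1 hlac)) (ltn_trans (ltn_ord k) hMN)).
apply: le_trans (leeD low (le_trans high coef)) _.
rewrite sumr_const -mulrS -[(_ *+ _)%R]mule_natl; apply: lee_wpmul2r.
  exact: rho_ge0 hrho _ (measurable_walsh_sum _ _ _ _).
by rewrite lee_fin ler_nat ltnS hL.
Qed.
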